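(* Let $q=p^m$ with $p$ an odd prime, $q\equiv 1\pmod 3$, $q\geq 13$. (a) For $\pi,\sigma\in P$ with $\pi(x)=a+\frac{r}{x-i}$ and $\sigma(x)=b+\frac{s}{x-j}$ ($r,s\neq0$), $\pi\sigma\in E(C_P(q))$ if and only if $r=s$ and $(b-a)(j-i)=r$. (b) An element $\pi\in PGL(2,q)$ is an isolated vertex of $C_P(q)$ if and only if $\pi(\infty)=\infty$.
   Context: $PGL(2,q)$ is the group of maps $x\mapsto\frac{ax+b}{cx+d}$ ($a,b,c,d\in GF(q)$, $ad\neq bc$) acting on $GF(q)\cup\{\infty\}$ with the usual conventions ($-d/c\mapsto\infty$, $\infty\mapsto a/c$ if $c\neq0$, $\infty\mapsto\infty$ if $c=0$). For $K,i\in GF(q)$ and $r\in GF(q)\setminus\{0\}$, $f_{K,r,i}$ is the element of $PGL(2,q)$ with $f_{K,r,i}(x)=K+\frac{r}{x-i}$ for $x\notin\{i,\infty\}$, $f_{K,r,i}(\infty)=K$, $f_{K,r,i}(i)=\infty$; $P$ is the set of all such $f_{K,r,i}$. $hd(\pi,\sigma)$ is the number of points at which $\pi,\sigma$ differ. With distinguished element $F=\infty$, $\pi^{\triangle}$ is the permutation with $\pi^{\triangle}(\pi^{-1}(\infty))=\pi(\infty)$, $\pi^{\triangle}(\infty)=\infty$, $\pi^{\triangle}(x)=\pi(x)$ otherwise. The contraction graph $C_P(q)$ has vertex set $PGL(2,q)$, with distinct $\pi,\sigma$ adjacent iff $hd(\pi^{\triangle},\sigma^{\triangle})=q-4$. 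*)

From HB Require Import structures.
From mathcomp Require Import all_boot all_order all_algebra all_fingroup all_field.
Set Implicit Arguments. Unset Strict Implicit. Unset Printing Implicit Defensive.
Import GRing.Theory.
Local Open Scope ring_scope.

(* Points of the projective line GF(q) ∪ {∞}: [None] is ∞. *)
Notation pt F := (option F).

Definition mobius (F : fieldType) (a b c d : F) (x : pt F) : pt F :=
  match x with
  | None => if c == 0 then None else Some (a / c)
  | Some y => if c * y + d == 0 then None else Some ((a * y + b) / (c * y + d))
  end.

Definition is_pgl (F : finFieldType) (f : {ffun pt F -> pt F}) : Prop :=
  exists a b c d : F, a * d != b * c /\ forall x, f x = mobius a b c d x.

Definition fKri (F : finFieldType) (K r i : F) : {ffun pt F -> pt F} :=
  [ffun x => match x with
             | None => Some K
             | Some y => if y == i then None else Some (K + r / (y - i))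
             end].

Definition hd (F : finFieldType) (f g : {ffun pt F -> pt F}) : nat :=
  #|[pred x | f x != g x]|.

Definition contr (F : finFieldType) (f : {ffun pt F -> pt F}) : {ffun pt F -> pt F} :=
  [ffun x => match x with
             | None => None
             | Some _ => if f x == None then f None else f x
             end].

Definition CP_adj (F : finFieldType) (f g : {ffun pt F -> pt F}) : Prop :=
  [/\ is_pgl f, is_pgl g, f <> g & hd (contr f) (contr g) = (#|F| - 4)%N].

Definition CP_isolated (F : finFieldType) (f : {ffun pt F -> pt F}) : Prop :=
  is_pgl f /\ forall g, is_pgl g -> ~ CP_adj f g.

From mathcomp Require Import all_boot all_algebra all_fingroup all_field all_solvable.
From mathcomp Require Import ring zify.
Set Implicit Arguments.
Unset Strict Implicit.
Import GRing.Theory.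
Local Open Scope ring_scope.

(* The contraction turns each vertex into a function GF(q) -> GF(q) that sends the pole to
   the image of infinity, and two vertices are adjacent iff these functions agree at exactly
   four points.  Off their poles, f_{a,r,i} and f_{b,s,j} agree only at the roots of a nonzero
   quadratic, so adjacency forces both poles to be agreement points, which is the stated
   condition; conversely, under that condition the two remaining agreement points are
   i + (i - j) w for the two primitive cube roots of unity w, which exist since q = 1 mod 3.
   A map fixing infinity is affine and agrees with any other element of PGL(2,q) at no more
   than three points, while a map moving infinity is some f_{K,r,i}, adjacent to
   f_{K+r,r,i+1}. *)

Lemma card_quadratic_roots (R : finIdomainType) (c d e : R) (A : {set R}) :
  (c, d, e) != (0, 0, 0) ->
  {in A, forall y, c * y ^+ 2 + d * y + e = 0} -> (#|A| <= 2)%N.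
Proof.
move=> nz rootA; pose Q := Poly [:: e; d; c].
have Q0 : Q != 0.
  apply: contra_neq nz => Q0; have Qk k : Q`_k = 0 by rewrite Q0 coef0.
  by move: (Qk 0%N) (Qk 1%N) (Qk 2%N); rewrite !coef_Poly /= => -> -> ->.
have rootQ : all (root Q) (enum A).
  apply/allP => y; rewrite mem_enum => /rootA Ay.
  by rewrite /root horner_Poly /= mul0r add0r -Ay; apply/eqP; ring.
have := max_poly_roots Q0 rootQ (enum_uniq A).
rewrite -cardE => ltAQ; rewrite -ltnS (leq_trans ltAQ) //; exact: size_Poly.
Qed.

Lemma cube_roots_of_unity (F : finFieldType) : (#|F| %% 3 = 1)%N ->
  exists w1 w2 : F, [/\ w1 != w2, w1 ^+ 2 + w1 + 1 = 0 & w2 ^+ 2 + w2 + 1 = 0].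
Proof.
move=> F3; have dvd3 : (3 %| #|[set: {unit F}]%G|)%N.
  by rewrite card_finField_unit (divn_eq #|F| 3) F3 addn1 /= dvdn_mull.
have [x _ ox] := Cauchy (isT : prime 3) dvd3.
pose w := FinRing.uval x.
have w3 : w ^+ 3 = 1 by rewrite -FinRing.val_unitX -ox expg_order.
have w1 : w != 1.
  apply/eqP => wx; have x1 : x = 1%g by apply: val_inj.
  by move: ox; rewrite x1 order1.
have w0 : w != 0 by apply: contra_eq_neq w3 => ->; rewrite expr0n /= eq_sym oner_eq0.
have ww : w ^+ 2 + w + 1 = 0.
  have : (w - 1) * (w ^+ 2 + w + 1) = 0 by rewrite -(subrr (w ^+ 3)) {2}w3; ring.
  by move/eqP; rewrite mulf_eq0 subr_eq0 (negPf w1) => /eqP.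
exists w, (w ^+ 2); split => //.
  by apply: contra_neq w1 => e; apply: (mulfI w0); rewrite mulr1 -expr2 -e.
have -> : (w ^+ 2) ^+ 2 + w ^+ 2 + 1 = w * w ^+ 3 + w ^+ 2 + 1 by ring.
by rewrite w3 mulr1 -ww; ring.
Qed.

Section ContractionGraph.

Variable F : finFieldType.
Implicit Types (f g : {ffun pt F -> pt F}) (a b K r s i j al be : F).

Definition agree f g : {set F} := [set y | contr f (Some y) == contr g (Some y)].

Lemma hd_contr f g : hd (contr f) (contr g) = (#|F| - #|agree f g|)%N.
Proof.
rewrite /hd; have -> : #|[pred x | contr f x != contr g x]| = #|image Some (~: agree f g)|.
  apply: eq_card => -[y|].
    by rewrite mem_image ?inE //; apply: Some_inj.
  rewrite !inE /contr !ffunE eqxx /=; apply/esym/negbTE/negP => /imageP [y _] //.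
by rewrite card_image; [rewrite -(cardsC (agree f g)) addKn | apply: Some_inj].
Qed.

Lemma card_field_ge4 : (#|F| %% 3 = 1)%N -> (4 <= #|F|)%N.
Proof. by have : (1 < #|F|)%N := card_finNzRing_gt1 F; lia. Qed.

Lemma CP_adjE f g : (4 <= #|F|)%N ->
  CP_adj f g <-> [/\ is_pgl f, is_pgl g, f <> g & #|agree f g| = 4%N].
Proof.
move=> q4; rewrite /CP_adj hd_contr.
have : (#|agree f g| <= #|F|)%N := max_card _.
by split=> -[fP gP fg A4]; split=> //; lia.
Qed.

(* At the pole [y = i] the term [r / 0] is [0], matching the image [K] of the point at infinity. *)
Lemma contr_fKri K r i y : contr (fKri K r i) (Some y) = Some (K + r / (y - i)).
Proof.
rewrite /contr /fKri !ffunE /=.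
by case: (y =P i) => [->|]; rewrite ?subrr ?invr0 ?mulr0 ?addr0.
Qed.

Lemma is_pgl_fKri K r i : r != 0 -> is_pgl (fKri K r i).
Proof.
move=> r0; exists K, (r - K * i), 1, (- i); split.
  apply: contra_neq r0; rewrite mulr1 => e.
  by rewrite -(subrK (K * i) r) -e mulrN addNr.
case=> [y|] /=; rewrite ffunE /=; last by rewrite oner_eq0 divr1.
rewrite mul1r -/(y - i) subr_eq0; case: eqP => // /eqP yi.
by congr Some; field; rewrite subr_eq0.
Qed.

Lemma agree_fKri a r i b s j :
  agree (fKri a r i) (fKri b s j) = [set y | a + r / (y - i) == b + s / (y - j)].
Proof. by apply/setP => y; rewrite !inE !contr_fKri (inj_eq (@Some_inj _)). Qed.

Lemma card_agree_fKri_off_poles a r i b s j : r != 0 -> fKri a r i != fKri b s j ->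
  (#|agree (fKri a r i) (fKri b s j) :\: [set i; j]| <= 2)%N.
Proof.
move=> r0 neq; apply: (@card_quadratic_roots _ (a - b) (r - s - (a - b) * (i + j))
  ((a - b) * i * j - r * j + s * i)).
  apply: contra_neq neq => -[/eqP]; rewrite subr_eq0 => /eqP <-.
  rewrite subrr !mul0r subr0 !add0r => /eqP; rewrite subr_eq0 => /eqP <- /eqP.
  by rewrite addrC -mulrBr mulf_eq0 (negPf r0) subr_eq0 => /eqP ->.
move=> y; rewrite agree_fKri !inE negb_or => /andP [/andP [yi yj] /eqP e].
have yi0 : y - i != 0 by rewrite subr_eq0.
have yj0 : y - j != 0 by rewrite subr_eq0.
have -> : (a - b) * y ^+ 2 + (r - s - (a - b) * (i + j)) * y + ((a - b) * i * j - r * j + s * i)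
    = (a + r / (y - i) - (b + s / (y - j))) * (y - i) * (y - j) by field; rewrite yi0 yj0.
by rewrite e subrr !mul0r.
Qed.

Lemma fKri_neq a r i b s j : i != j -> fKri a r i != fKri b s j.
Proof. by move=> ij; apply/eqP => /ffunP /(_ (Some i)); rewrite !ffunE /= eqxx (negPf ij). Qed.

Lemma fKri_poles_agree a r i b s j : i != j ->
  i \in agree (fKri a r i) (fKri b s j) /\ j \in agree (fKri a r i) (fKri b s j) <->
  r = s /\ (b - a) * (j - i) = r.
Proof.
move=> ij; have ji0 : j - i != 0 by rewrite subr_eq0 eq_sym.
have ij0 : i - j != 0 by rewrite subr_eq0.
rewrite agree_fKri !inE !subrr !invr0 !mulr0 !addr0.
split=> [[/eqP ei /eqP ej] | [<- rE]].
  have rE : (b - a) * (j - i) = r by rewrite -ej; field.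
  by split=> //; rewrite -rE ei; field.
by split; apply/eqP; rewrite -rE; field.
Qed.

Lemma agree_fKri_cube_root a r i b j u : i != j -> (b - a) * (j - i) = r ->
  u ^+ 2 + u + 1 = 0 -> i + (i - j) * u \in agree (fKri a r i) (fKri b r j) :\: [set i; j].
Proof.
move=> ij rE uE; have ij0 : i - j != 0 by rewrite subr_eq0.
have u0 : u != 0 by apply: contra_eq_neq uE => ->; rewrite expr0n /= !add0r oner_neq0.
have u1 : u + 1 != 0.
  apply: contra_eq_neq uE => /eqP; rewrite addr_eq0 => /eqP ->.
  by rewrite sqrrN expr1n subrK oner_neq0.
have yi : i + (i - j) * u - i = (i - j) * u by ring.
have yj : i + (i - j) * u - j = (i - j) * (u + 1) by ring.
rewrite agree_fKri !inE negb_or -andbA; apply/and3P; split.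
- by rewrite -subr_eq0 yi mulf_neq0.
- by rewrite -subr_eq0 yj mulf_neq0.
rewrite yi yj -subr_eq0.
have -> : a + r / ((i - j) * u) - (b + r / ((i - j) * (u + 1))) =
    (a - b) * (u ^+ 2 + u + 1) / (u * (u + 1)).
  by rewrite -rE; field; rewrite u0 u1 ij0.
by rewrite uE mulr0 mul0r.
Qed.

Lemma card_agree_fKri_eq4_poles a r i b s j : r != 0 -> fKri a r i != fKri b s j ->
  #|agree (fKri a r i) (fKri b s j)| = 4%N ->
  i != j /\ i \in agree (fKri a r i) (fKri b s j) /\ j \in agree (fKri a r i) (fKri b s j).
Proof.
set A := agree _ _ => r0 fg A4; set S := [set i; j].
have := card_agree_fKri_off_poles r0 fg; rewrite -/A -/S => offS.
have : #|A| = (#|A :&: S| + #|A :\: S|)%N by rewrite cardsID.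
have : (#|A :&: S| <= #|S|)%N := subset_leq_card (subsetIr A S).
have : #|S| = (i != j).+1 := cards2 i j.
case: eqP => [_|/eqP ij] S2 AS_S; first lia.
move=> splitA; have SA : A :&: S = S by apply/eqP; rewrite eqEcard subsetIr; lia.
have /subsetP SsubA : S \subset A by rewrite -SA subsetIl.
by split=> //; split; apply: SsubA; rewrite !inE eqxx ?orbT.
Qed.

Lemma card_agree_fKri_eq4 a r i b j : (#|F| %% 3 = 1)%N -> r != 0 -> i != j ->
  (b - a) * (j - i) = r -> #|agree (fKri a r i) (fKri b r j)| = 4%N.
Proof.
set A := agree _ _ => F3 r0 ij rE; set S := [set i; j].
have ij0 : i - j != 0 by rewrite subr_eq0.
have fg : fKri a r i != fKri b r j by apply: fKri_neq.
have [iA jA] : i \in A /\ j \in A by apply/fKri_poles_agree.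
have AS : A :&: S = S by apply/setIidPr/subsetP => y /set2P[] ->.
have [w1 [w2 [w12 w1E w2E]]] := cube_roots_of_unity F3.
pose z u := i + (i - j) * u.
have : (#|[set z w1; z w2]| <= #|A :\: S|)%N.
  by apply/subset_leq_card/subsetP => y /set2P[] ->; apply: agree_fKri_cube_root.
rewrite cards2 (inj_eq (addrI _)) (inj_eq (mulfI ij0)) w12.
have := card_agree_fKri_off_poles r0 fg; rewrite -/A -/S.
by rewrite -(cardsID S A) AS cards2 ij; lia.
Qed.

Lemma CP_adj_fKri a b i j r s : (#|F| %% 3 = 1)%N -> r != 0 -> s != 0 ->
  CP_adj (fKri a r i) (fKri b s j) <-> r = s /\ (b - a) * (j - i) = r.
Proof.
move=> F3 r0 s0; rewrite CP_adjE ?card_field_ge4 //; split=> [[_ _ /eqP fg A4] | [<- rE]].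
  have [ij ijA] := card_agree_fKri_eq4_poles r0 fg A4.
  exact/fKri_poles_agree.
have ij : i != j by apply: contra_neq r0 => eij; rewrite -rE eij subrr mulr0.
split; [exact: is_pgl_fKri | exact: is_pgl_fKri | exact/eqP/fKri_neq |].
exact: card_agree_fKri_eq4.
Qed.

Definition affinity al be : {ffun pt F -> pt F} := [ffun x => omap (fun y => al * y + be) x].

Lemma is_pgl_cases f : is_pgl f ->
  (exists al be, al != 0 /\ f = affinity al be) \/ (exists K r i, r != 0 /\ f = fKri K r i).
Proof.
case=> [a [b [c [d [nd fE]]]]]; have [c0 | c0] := eqVneq c 0.
  have d0 : d != 0 by apply: contra_neq nd => ->; rewrite c0 !mulr0.
  have a0 : a != 0 by apply: contra_neq nd => ->; rewrite c0 mulr0 mul0r.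
  left; exists (a / d), (b / d); split; first by rewrite mulf_neq0 ?invr_eq0.
  apply/ffunP => -[y|]; rewrite fE ffunE /= c0 ?eqxx // mul0r add0r (negPf d0).
  by congr Some; field.
right; exists (a / c), ((b * c - a * d) / c ^+ 2), (- d / c); split.
  by rewrite mulf_neq0 ?invr_eq0 ?expf_neq0 // subr_eq0 eq_sym.
apply/ffunP => -[y|]; rewrite fE ffunE /=; last by rewrite (negPf c0).
have cyd : c * y + d = c * (y - - d / c) by field.
rewrite cyd mulf_eq0 (negPf c0) subr_eq0 /=; case: eqP => // /eqP yi.
by congr Some; field; rewrite c0 opprK mulrC cyd mulf_neq0 // subr_eq0.
Qed.

Lemma contr_affinity al be y : contr (affinity al be) (Some y) = Some (al * y + be).
Proof. by rewrite /contr !ffunE. Qed.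

Lemma card_agree_affinity al be al' be' : affinity al be != affinity al' be' ->
  (#|agree (affinity al be) (affinity al' be')| <= 2)%N.
Proof.
move=> neq; apply: (@card_quadratic_roots _ 0 (al - al') (be - be')).
  by apply: contra_neq neq => -[/eqP + /eqP]; rewrite !subr_eq0 => /eqP -> /eqP ->.
move=> y; rewrite inE !contr_affinity (inj_eq Some_inj) => /eqP e.
by rewrite -[RHS](subrr (al' * y + be')) -{1}e; ring.
Qed.

Lemma card_agree_affinity_fKri al be K r i : al != 0 ->
  (#|agree (affinity al be) (fKri K r i)| <= 3)%N.
Proof.
move=> al0; set A := agree _ _; rewrite -(cardsID [set i] A).
have : (#|A :&: [set i]| <= 1)%N by rewrite -(cards1 i) subset_leq_card ?subsetIr.
have : (#|A :\: [set i]| <= 2)%N.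
  apply: (@card_quadratic_roots _ al (be - K - al * i) (- (be - K) * i - r)).
    by apply: contra_neq al0 => -[].
  move=> y; rewrite !inE contr_affinity contr_fKri (inj_eq Some_inj) => /andP [yi /eqP e].
  have yi0 : y - i != 0 by rewrite subr_eq0.
  have -> : al * y ^+ 2 + (be - K - al * i) * y + (- (be - K) * i - r) =
      (al * y + be - (K + r / (y - i))) * (y - i) by field.
  by rewrite e subrr mul0r.
lia.
Qed.

Lemma CP_isolated_pgl f : (#|F| %% 3 = 1)%N -> is_pgl f -> CP_isolated f <-> f None = None.
Proof.
move=> F3 pf; split=> [[_ iso] | fN].
  case: (is_pgl_cases pf) => [[al [be [_ ->]]] | [K [r [i [r0 fE]]]]]; first by rewrite ffunE.
  case: (iso (fKri (K + r) r (i + 1))); first exact: is_pgl_fKri.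
  by rewrite fE; apply/(CP_adj_fKri _ _ _ _ F3 r0 r0); split=> //; ring.
split=> // g pg; rewrite CP_adjE ?card_field_ge4 // => -[_ _ /eqP fg A4].
have [[al [be [al0 fE]]] | [K [r [i [_ fE]]]]] := is_pgl_cases pf; last by rewrite fE ffunE in fN.
have [[al' [be' [_ gE]]] | [K [r [i [_ gE]]]]] := is_pgl_cases pg; rewrite fE gE in fg A4.
  by have := card_agree_affinity fg; rewrite A4.
by have := card_agree_affinity_fKri be K r i al0; rewrite A4.
Qed.

End ContractionGraph.

Theorem corollary12 (F : finFieldType) (p m : nat) :
  prime p -> odd p -> #|F| = (p ^ m)%N -> (#|F| %% 3 = 1)%N -> (13 <= #|F|)%N ->
  (forall a b i j r s : F, r != 0 -> s != 0 ->
     (CP_adj (fKri a r i) (fKri b s j) <-> (r = s /\ (b - a) * (j - i) = r)))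
  /\
  (forall f : {ffun option F -> option F}, is_pgl f ->
     (CP_isolated f <-> f None = None)).
Proof.
move=> _ _ _ F3 _; split=> [a b i j r s | f]; [exact: CP_adj_fKri | exact: CP_isolated_pgl].
Qed.
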